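(* Fix $\gamma\in(0,1]$ and $0<\alpha<0.25$, and let $\xi>0$ be arbitrarily small. There exist $C>0$ and $N_0$ such that for all $N\ge N_0$, $$-\frac1N\sum_{i=1}^b\big[(J^T(s^* ))^{-1}\big]_{ii}\,\tilde f_i(s^* )\le\frac{C}{N^{1-2\alpha-3\xi}}.$$
   Context: Let $N\ge1$, $\lambda=1-\gamma/N^\alpha$, and $b=b(N)\ge1$ an integer with $b=O(\log N)$. The mean-field vector field is $f_k(s)=\lambda(s_{k-1}^2-s_k^2)-(s_k-s_{k+1})$, $k=1,\dots,b$, with $s_0=1,s_{b+1}=0$; $s^*$ is its unique equilibrium in $\{s\in\mathbb R^b:1\ge s_1\ge\cdots\ge s_b\ge0\}$. $J(s^* )$ is the $b\times b$ tridiagonal Jacobian of $f$ at $s^*$ with $J_{kk}=-2\lambda s^*_k-1$, $J_{k,k+1}=1$, $J_{k+1,k}=2\lambda s^*_k$. $\tilde f_i(s)=\frac12[\lambda(s_{i-1}^2-s_i^2)+(s_i-s_{i+1})]$. (In the paper $[(J^T(s^* ))^{-1}]_{ii}=\nabla^2g(s)_{ii}$ for the solution $g$ of $\nabla g(s)\cdot J(s^* )(s-s^* )=\|s-s^*\|^2$, and the lemma is stated for $s$ with $\|s-s^*\|^{2r}\le N^{-\epsilon}$; the quantity does not depend on $s$.) *)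

From HB Require Import structures.
From mathcomp Require Import all_boot all_order all_algebra.
From mathcomp Require Import all_classical all_reals all_analysis.
Set Implicit Arguments. Unset Strict Implicit. Unset Printing Implicit Defensive.
Import Order.TTheory GRing.Theory Num.Theory.
Local Open Scope ring_scope.

Section Defs.
Variable R : realType.

Definition lam (gamma alpha : R) (N : nat) : R := 1 - gamma / (N%:R `^ alpha).

(* A state s = (s_1,...,s_b) is stored as s : 'cV_b with s_k = s (k-1) 0.
   sext s k is s_k extended with boundary values s_0 = 1, s_k = 0 for k > b. *)
Definition sext (b : nat) (s : 'cV[R]_b) (k : nat) : R :=
  if k == 0%N then 1 else
  match @insub nat (fun j => (j < b)%N) 'I_b k.-1 with
  | Some i => s i ord0
  | None => 0
  end.

(* the mean-field vector field, component k = i+1 *)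
Definition fvec (l : R) (b : nat) (s : 'cV[R]_b) : 'cV[R]_b :=
  \col_(i < b) (l * (sext s i ^+ 2 - sext s i.+1 ^+ 2)
                - (sext s i.+1 - sext s i.+2)).

(* tilde f, component i+1 *)
Definition ftilde (l : R) (b : nat) (s : 'cV[R]_b) (i : 'I_b) : R :=
  2^-1 * (l * (sext s i ^+ 2 - sext s i.+1 ^+ 2) + (sext s i.+1 - sext s i.+2)).

Definition in_region (b : nat) (s : 'cV[R]_b) : Prop :=
  forall k : nat, (k <= b)%N -> sext s k.+1 <= sext s k.

Definition jac (l : R) (b : nat) (s : 'cV[R]_b) : 'M[R]_b :=
  \matrix_(i < b, j < b)
    if i == j then - 2 * l * s i ord0 - 1
    else if (val j == (val i).+1)%N then 1
    else if (val i == (val j).+1)%N then 2 * l * s j ord0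
    else 0.

End Defs.

From HB Require Import structures.
From mathcomp Require Import all_boot all_order all_algebra.
From mathcomp Require Import all_classical all_reals all_analysis.
From mathcomp Require Import ring lra.
Set Implicit Arguments. Unset Strict Implicit. Unset Printing Implicit Defensive.
Import Order.TTheory GRing.Theory Num.Theory.
Local Open Scope ring_scope.

(* Let r_m = 2 lambda s*_m and let y be minus the (i+1)-st column of
   (J^T)^-1, extended by y_0 = y_(b+1) = 0.  Then J^T y = -e_(i+1) is the
   three-term recurrence (y_m - y_(m-1)) - r_m (y_(m+1) - y_m) = [m = i+1].
   Below i+1 it gives y_k = Q_k (y_(k+1) - y_k), where Q_k is the sum of the
   suffix products r_j ... r_k; above i+1 it gives y_k (y_(k+1) - y_k) <= 0;
   together y_(i+1) <= Q_i + 1.  The equilibrium equations give s*_1 <= lambda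
   and (1 - s*_1) r_1 ... r_k <= s*_k - s*_(k+1) <= 1, and since r is
   nonincreasing each suffix product is at most a prefix product, so
   (1 - lambda) (Q_i + 1) <= i + 1.  Hence each diagonal entry of -(J^T)^-1 is
   O(b N^alpha / gamma), tilde f_i lies in [0, 1], and b = O(ln N) =
   O(N^(alpha/2)) makes the whole sum O(N^(2 alpha - 1)). *)

Section RealSequences.
Variable R : realType.
Implicit Types (r y : nat -> R) (d : R).

(* partial_prod r k = r_1 ... r_k and
   suffix_prod_sum r k = sum_(1 <= j <= k) r_j ... r_k. *)
Fixpoint partial_prod r k : R :=
  if k is k'.+1 then partial_prod r k' * r k else 1.

Fixpoint suffix_prod_sum r k : R :=
  if k is k'.+1 then (suffix_prod_sum r k' + 1) * r k else 0.

Lemma partial_prod_ge0 r k : (forall m, 0 <= r m) -> 0 <= partial_prod r k.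
Proof. by move=> r_ge0; elim: k => [|k IH] /=; [exact: ler01 | exact: mulr_ge0]. Qed.

Lemma suffix_prod_sum_ge0 r k : (forall m, 0 <= r m) -> 0 <= suffix_prod_sum r k.
Proof.
move=> r_ge0; elim: k => [|k IH] //=.
by apply: mulr_ge0 => //; apply: addr_ge0.
Qed.

Lemma partial_prod_shift_le r k : (forall m, 0 <= r m) -> (forall m, r m.+1 <= r m) ->
  partial_prod (r \o succn) k <= partial_prod r k.
Proof.
move=> r_ge0 r_nonincr; elim: k => [|k IH] //=.
apply: ler_pM => //; exact: partial_prod_ge0 (fun m => r_ge0 m.+1).
Qed.

Lemma suffix_prod_sumS r k :
  suffix_prod_sum r k.+1 = partial_prod r k.+1 + suffix_prod_sum (r \o succn) k.
Proof. by elim: k => [|k /= ->] /=; ring. Qed.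

(* Since r is nonincreasing, the suffix product r_j ... r_n is at most the
   prefix product r_1 ... r_(n-j+1). *)
Lemma suffix_prod_sum_le r d n : (forall m, 0 <= r m) -> (forall m, r m.+1 <= r m) ->
  0 <= d -> (forall k, (k <= n)%N -> d * partial_prod r k <= 1) ->
  d * suffix_prod_sum r n <= n%:R.
Proof.
elim: n r => [|n IH] r r_ge0 r_nonincr d_ge0 d_prod; first by rewrite mulr0.
have shift_r : d * suffix_prod_sum (r \o succn) n <= n%:R.
  apply: IH => // [m|m|k kn] /=; [exact: r_ge0 | exact: r_nonincr |].
  apply: le_trans (d_prod k (leqW kn)).
  by apply: ler_wpM2l => //; exact: partial_prod_shift_le.
rewrite suffix_prod_sumS mulrDr -natr1.
by have := d_prod n.+1 (leqnn _); lra.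
Qed.

Section ThreeTerm.
Variables (r y : nat -> R) (n i : nat).
Hypothesis r_ge0 : forall k, 0 <= r k.
Hypotheses (y0 : y 0 = 0) (y_end : y n.+1 = 0).
Hypothesis y_rec : forall m, (0 < m <= n)%N ->
  (y m - y m.-1) - r m * (y m.+1 - y m) = (m == i)%:R.
Hypothesis i_range : (0 < i <= n)%N.

Lemma recurrence_below k : (k < i)%N -> y k = suffix_prod_sum r k * (y k.+1 - y k).
Proof.
elim: k => [|k IH] ki /=; first by rewrite y0 mul0r.
have /andP[_ i_le_n] := i_range.
have := @y_rec k.+1; rewrite (ltn_eqF ki) => /(_ (ltnW (leq_trans ki i_le_n))) /= rec_k.
have step : y k.+1 - y k = r k.+1 * (y k.+2 - y k.+1) by lra.
by rewrite -mulrA -step; have := IH (ltnW ki); lra.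
Qed.

Lemma recurrence_above k : (i <= k <= n)%N -> y k * (y k.+1 - y k) <= 0.
Proof.
case/andP=> ik /subnK; move: (n - k)%N => t.
elim: t k ik => [|t IH] k ik tk; first by have := y_end; rewrite -tk add0n => ->; nra.
have above_next := IH k.+1 (leqW ik) (etrans (addnS t k) tk).
have := @y_rec k.+1; rewrite gtn_eqF // -tk => /(_ (leq_addl _ _)) /= rec_next.
set d := y k.+2 - y k.+1 in above_next rec_next.
have -> : y k = y k.+1 - r k.+1 * d by lra.
have -> : y k.+1 - (y k.+1 - r k.+1 * d) = r k.+1 * d by ring.
have := r_ge0 k.+1; nra.
Qed.

Lemma recurrence_peak_le : y i <= suffix_prod_sum r i.-1 + 1.
Proof.
have /andP[i_gt0 i_le_n] := i_range.
have above : y i * (y i.+1 - y i) <= 0 by apply: recurrence_above; rewrite leqnn.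
have := y_rec i_range; rewrite eqxx.
have := @recurrence_below i.-1; rewrite prednK // => /(_ (leqnn i)) below /= peak.
have A_ge1 : 1 <= suffix_prod_sum r i.-1 + 1.
  by rewrite lerDr; exact: suffix_prod_sum_ge0.
set A := suffix_prod_sum r i.-1 + 1 in A_ge1 *.
set d := y i.+1 - y i in above peak.
have yA : y i = A * (1 + r i * d).
  have -> : 1 + r i * d = y i - y i.-1 by move: peak; rewrite mulr1n; lra.
  by rewrite /A mulrDl mul1r -below; ring.
have : y i * (y i - A) <= 0.
  have -> : y i * (y i - A) = A * r i * (y i * d) by rewrite {2}yA; ring.
  by apply: mulr_ge0_le0 => //; apply: mulr_ge0 => //; lra.
nra.
Qed.

Hypothesis r_nonincr : forall k, r k.+1 <= r k.

Lemma recurrence_peak_bound d : 0 <= d ->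
  (forall k, (k < i)%N -> d * partial_prod r k <= 1) -> y i * d <= i%:R.
Proof.
move=> d_ge0 d_prod; have /andP[i_gt0 _] := i_range.
have d_le1 : d <= 1 by rewrite -[d]mulr1; exact: (d_prod 0).
have sum_le : d * suffix_prod_sum r i.-1 <= i.-1%:R.
  by apply: suffix_prod_sum_le => // k ki; apply: d_prod; rewrite -ltnS prednK in ki.
have peak := recurrence_peak_le.
have i_eq : i%:R = i.-1%:R + 1 :> R by rewrite natr1 prednK.
case: (lerP (y i) 0) => [y_le0|y_gt0]; first by have := ler0n R i; nra.
nra.
Qed.
End ThreeTerm.

Section EquilibriumProfile.
Variables (l : R) (b : nat) (s : nat -> R).
Hypothesis l_ge0 : 0 <= l.
Hypotheses (s0 : s 0 = 1) (s_end : s b.+1 = 0).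
Hypotheses (s_nonincr : forall k, s k.+1 <= s k) (s_ge0 : forall k, 0 <= s k).
Hypothesis s_eq : forall k, (k < b)%N ->
  l * (s k ^+ 2 - s k.+1 ^+ 2) = s k.+1 - s k.+2.

Lemma profile_le1 k : s k <= 1.
Proof. by elim: k => [|k IH]; [rewrite s0 | exact: le_trans (s_nonincr k) IH]. Qed.

Lemma profile_rate_ge0 k : 0 <= 2 * l * s k.
Proof. by rewrite -mulrA mulr_ge0 ?mulr_ge0. Qed.

Lemma profile_first_le : s 1 <= l.
Proof.
have telescope m : (m <= b)%N -> s 1 - s m.+1 = l * (1 - s m ^+ 2).
  elim: m => [|m IH] mb; first by rewrite s0; lra.
  by have := s_eq mb; have := IH (ltnW mb); lra.
have := telescope b (leqnn b); rewrite s_end.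
by have := mulr_ge0 l_ge0 (sqr_ge0 (s b)); lra.
Qed.

Lemma profile_gap k : (k <= b)%N ->
  partial_prod (fun m => 2 * l * s m) k * (1 - s 1) <= s k - s k.+1.
Proof.
elim: k => [|k IH] kb /=; first by rewrite s0 mul1r.
have IH' := IH (ltnW kb).
have -> : s k.+1 - s k.+2 = (s k - s k.+1) * (l * (s k + s k.+1)).
  by rewrite -s_eq //; ring.
have r_le : 2 * l * s k.+1 <= l * (s k + s k.+1).
  by have := ler_wpM2l l_ge0 (s_nonincr k); lra.
rewrite mulrAC; apply: ler_pM => //.
- apply: mulr_ge0; last by have := profile_le1 1; lra.
  exact: partial_prod_ge0 profile_rate_ge0.
- exact: profile_rate_ge0.
Qed.

Lemma profile_prod_le1 k : (k <= b)%N ->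
  (1 - l) * partial_prod (fun m => 2 * l * s m) k <= 1.
Proof.
move=> kb; have gap := profile_gap kb.
have T_ge0 : 0 <= partial_prod (fun m => 2 * l * s m) k.
  exact: partial_prod_ge0 profile_rate_ge0.
have := profile_first_le; have := profile_le1 k; have := s_ge0 k.+1; nra.
Qed.

End EquilibriumProfile.
End RealSequences.

Lemma mulmx_col_invmx (R : comUnitRingType) n (A : 'M[R]_n) (i k : 'I_n) :
  A \in unitmx -> (A *m col i (invmx A)) k ord0 = (k == i)%:R.
Proof.
move=> A_unit; have := congr1 (fun M : 'M[R]_n => M k i) (mulmxV A_unit).
rewrite [in RHS]mxE => <-; rewrite !mxE; apply: eq_bigr => j _.
by rewrite mxE.
Qed.

Section MeanField.
Variables (R : realType) (b : nat).
Implicit Types (s v : 'cV[R]_b) (l : R).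

Lemma sext_ord v (j : 'I_b) : sext v j.+1 = v j ord0.
Proof.
rewrite /sext /=; case: insubP => /= [u _ u_j|]; last by rewrite ltn_ord.
by congr (v _ _); apply: val_inj.
Qed.

Lemma sext_out v k : (b < k)%N -> sext v k = 0.
Proof.
rewrite /sext; case: k => [//|k] /= bk.
by case: insubP => //= u; rewrite ltnNge -ltnS bk.
Qed.

Lemma fvec_eq0_sext l s k : fvec l s = 0 -> (k < b)%N ->
  l * (sext s k ^+ 2 - sext s k.+1 ^+ 2) = sext s k.+1 - sext s k.+2.
Proof.
move=> /(congr1 (fun v : 'cV_b => v (Ordinal _) ord0)) f_eq kb.
by have := f_eq k kb; rewrite !mxE /=; lra.
Qed.

Definition zext v (m : nat) : R := if m == 0%N then 0 else sext v m.

Lemma sum_ord_delta n m (F : nat -> R) :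
  \sum_(j < n) (j == m :> nat)%:R * F j = if (m < n)%N then F m else 0.
Proof.
transitivity (\sum_(j < n | j == m :> nat) F j); last exact: big_ord1_eq.
rewrite [RHS]big_mkcond; apply: eq_bigr => j _.
by case: (_ == _); rewrite ?mul1r ?mul0r.
Qed.

Lemma tridiag_term (j k : nat) (A B z : R) :
  (if j == k then A else if k == j.+1 then 1 else if j == k.+1 then B else 0) * z
  = (j == k)%:R * (A * z) + (j.+1 == k)%:R * z + (j == k.+1)%:R * (B * z).
Proof.
case: (ltngtP j k) => [jk|kj|->].
- rewrite (ltn_eqF (ltnW jk : (j < k.+1)%N)) [k == _]eq_sym.
  by case: (_ == _); rewrite /=; ring.
- rewrite (ltn_eqF (ltnW kj : (k < j.+1)%N)) (gtn_eqF (ltnW kj : (k < j.+1)%N)).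
  by case: (_ == _); rewrite /=; ring.
- by rewrite (gtn_eqF (ltnSn k)) (ltn_eqF (ltnSn k)) /=; ring.
Qed.

Lemma jacT_mulmxE l s v (k : 'I_b) :
  ((jac l s)^T *m v) k ord0 =
  (zext v k - zext v k.+1) + 2 * l * sext s k.+1 * (zext v k.+2 - zext v k.+1).
Proof.
set A := - 2 * l * sext s k.+1 - 1; set B := 2 * l * sext s k.+1.
rewrite !mxE (eq_bigr (fun j : 'I_b => (if val j == val k then A
    else if val k == (val j).+1 then 1 else if val j == (val k).+1 then B else 0)
    * zext v j.+1)); last first.
  move=> j _; rewrite !mxE /zext /= -!sext_ord val_eqE.
  by case: eqP => [->|].
have below : \sum_(j < b) ((val j).+1 == k)%:R * zext v j.+1 = zext v k.
  case: k {A B} => [[|k] kb] /=; first by rewrite big1 // => j _; rewrite mul0r.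
  by under eq_bigr do rewrite eqSS; rewrite (sum_ord_delta b k (fun j => zext v j.+1)) ltnW.
rewrite (eq_bigr _ (fun j _ => tridiag_term _ _ _ _ _)) !big_split /= below.
rewrite (sum_ord_delta b k (fun j => A * zext v j.+1)).
rewrite (sum_ord_delta b k.+1 (fun j => B * zext v j.+1)) ltn_ord.
case: ltnP => [_|bk]; first by rewrite /A /B; ring.
by rewrite [zext v k.+2]/zext /= sext_out // /A /B; ring.
Qed.

Section Region.
Variable s : 'cV[R]_b.
Hypothesis s_region : in_region s.

Lemma sext_nonincr k : sext s k.+1 <= sext s k.
Proof.
case: (leqP k b) => [kb|bk]; first exact: s_region.
by rewrite !sext_out // ltnW.
Qed.

Lemma sext_ge0 k : 0 <= sext s k.
Proof.
have sext_le m n : (m <= n)%N -> sext s n <= sext s m.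
  move=> /subnK <-; elim: (n - m)%N => [|t IH] //.
  exact: le_trans (sext_nonincr _) IH.
by rewrite -(@sext_out s (k + b.+1)) ?sext_le ?leq_addr // addnS ltnS leq_addl.
Qed.

Lemma sext_le1 k : sext s k <= 1.
Proof. by elim: k => [|k IH]; [rewrite /sext | exact: le_trans (sext_nonincr k) IH]. Qed.

Lemma ftilde_bounds l (i : 'I_b) : 0 <= l <= 1 -> 0 <= ftilde l s i <= 1.
Proof.
case/andP=> l_ge0 l_le1; rewrite /ftilde.
have := sext_nonincr i; have := sext_nonincr i.+1.
have := sext_ge0 i.+2; have := sext_le1 i.
set a := sext s i; set c := sext s i.+1; set d := sext s i.+2 => a_le1 d_ge0 d_le_c c_le_a.
have c_ge0 : 0 <= c by lra.
have sq_ge0 : 0 <= a ^+ 2 - c ^+ 2 by rewrite !expr2; nra.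
have sq_le1 : a ^+ 2 - c ^+ 2 <= 1 by rewrite !expr2; nra.
have := mulr_ge0 l_ge0 sq_ge0; have := ler_pM l_ge0 sq_ge0 l_le1 sq_le1.
rewrite mul1r => *; apply/andP; split; lra.
Qed.

Lemma sext_prod_le1 l k : 0 <= l -> fvec l s = 0 -> (k <= b)%N ->
  (1 - l) * partial_prod (fun m => 2 * l * sext s m) k <= 1.
Proof.
move=> l_ge0 s_eq; apply: profile_prod_le1 => //.
- exact: sext_out.
- exact: sext_nonincr.
- exact: sext_ge0.
- by move=> m; apply: fvec_eq0_sext.
Qed.

Lemma inv_jacT_diag_bound l (i : 'I_b) : 0 <= l < 1 -> fvec l s = 0 ->
  - (invmx (jac l s)^T) i i * (1 - l) <= 3 * b%:R.
Proof.
case/andP=> l_ge0 l_lt1 s_eq.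
have b_ge1 : 1 <= b%:R :> R by rewrite ler1n (leq_trans _ (ltn_ord i)).
have [U|U] := boolP ((jac l s)^T \in unitmx); last first.
  (* J^T is in fact invertible, but the junk value invmx A = A of a singular
     A satisfies the bound as well. *)
  rewrite invmx_out ?inE // !mxE eqxx -sext_ord.
  have := sext_ge0 i.+1; have := sext_le1 i.+1; nra.
set v := col i (invmx (jac l s)^T).
pose r m := 2 * l * sext s m; pose y m := - zext v m.
have y_rec m : (0 < m <= b)%N ->
    (y m - y m.-1) - r m * (y m.+1 - y m) = (m == i.+1)%:R.
  case: m => [//|k] /= kb.
  rewrite eqSS -[k]/(val (Ordinal kb)) -(mulmx_col_invmx i _ U) jacT_mulmxE.
  by rewrite /y /r /=; ring.
have y0 : y 0 = 0 by rewrite /y /zext /= oppr0.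
have y_end : y b.+1 = 0 by rewrite /y /zext /= sext_out ?oppr0.
have r_ge0 : forall m, 0 <= r m := profile_rate_ge0 l_ge0 sext_ge0.
have r_nonincr k : r k.+1 <= r k by apply: ler_wpM2l (sext_nonincr k); rewrite mulr_ge0.
have i_range : (0 < i.+1 <= b)%N by rewrite ltn_ord.
have prod_le1 k : (k < i.+1)%N -> (1 - l) * partial_prod r k <= 1.
  by move=> ki; apply: sext_prod_le1 => //; exact: ltnW (leq_trans ki (ltn_ord i)).
have d_ge0 : 0 <= 1 - l by rewrite subr_ge0 ltW.
have := recurrence_peak_bound r_ge0 y0 y_end y_rec i_range r_nonincr d_ge0 prod_le1.
rewrite /y /zext /= sext_ord /v mxE.
have : i.+1%:R <= b%:R :> R by rewrite ler_nat.
lra.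
Qed.

Lemma inv_jacT_ftilde_sum_bound l : 0 <= l < 1 -> fvec l s = 0 ->
  - (\sum_(i < b) (invmx (jac l s)^T) i i * ftilde l s i) * (1 - l) <= 3 * b%:R ^+ 2.
Proof.
move=> /[dup] /andP[l_ge0 l_lt1] l_range s_eq.
have l_le1 : 0 <= l <= 1 by rewrite l_ge0 ltW.
have -> : 3 * b%:R ^+ 2 = \sum_(i < b) (3 * b%:R : R).
  by rewrite sumr_const card_ord -[RHS]mulr_natr expr2 mulrA.
rewrite -sumrN mulr_suml; apply: ler_sum => i _.
have := inv_jacT_diag_bound i l_range s_eq.
have /andP[] := ftilde_bounds i l_le1.
have := ler0n R b; nra.
Qed.

End Region.
End MeanField.

Section Asymptotics.
Variable R : realType.

Lemma ln_le_powR (e p : R) : 0 < e -> 0 < p -> e * ln p <= p `^ e.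
Proof. by move=> e_gt0 p_gt0; rewrite -ln_powR; exact/ltW/ln_sublinear/powR_gt0. Qed.

Lemma sqr_le_powR_of_le_ln (K B p a : R) : 0 < a -> 1 <= p -> 0 <= B ->
  B <= K * ln p -> B ^+ 2 <= (2 * K / a) ^+ 2 * p `^ a.
Proof.
move=> a_gt0 p_ge1 B_ge0 B_le; set e := a / 2.
have e_gt0 : 0 < e by rewrite divr_gt0.
have p_gt0 : 0 < p by exact: lt_le_trans ltr01 p_ge1.
have e_ln := ln_le_powR e_gt0 p_gt0.
have eln_ge0 : 0 <= e * ln p by apply: mulr_ge0; [exact: ltW | exact: ln_ge0].
have eB_le : (e * B) ^+ 2 <= (K * p `^ e) ^+ 2.
  have eB : e * B <= K * (e * ln p) by rewrite mulrCA ler_pM2l.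
  have eB_ge0 : 0 <= e * B := mulr_ge0 (ltW e_gt0) B_ge0.
  apply: (le_trans (y := (K * (e * ln p)) ^+ 2)); first by rewrite !expr2 ler_pM.
  by rewrite !(exprMn _ K) ler_wpM2l ?sqr_ge0 // !expr2 ler_pM.
have -> : p `^ a = p `^ e * p `^ e.
  by rewrite -powRD ?(gt_eqF p_gt0) ?implybT // /e -splitr.
rewrite -(ler_pM2l (exprn_gt0 2 e_gt0)).
have -> : e ^+ 2 * ((2 * K / a) ^+ 2 * (p `^ e * p `^ e)) = (K * p `^ e) ^+ 2.
  by rewrite /e; field; rewrite (gt_eqF a_gt0).
by rewrite -exprMn.
Qed.

Lemma powR_mul_le1 (p x y : R) : 1 <= p -> x + y <= 1 -> p `^ x * p `^ y <= p.
Proof.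
move=> p_ge1 xy_le1; have p_gt0 : 0 < p by exact: lt_le_trans ltr01 p_ge1.
rewrite -powRD; last by rewrite (gt_eqF p_gt0) implybT.
rewrite -[leRHS](powRr1 (ltW p_gt0)).
exact: ler_powR.
Qed.

Lemma lam_range (gamma alpha : R) (N : nat) : 0 < gamma -> gamma <= 1 ->
  0 <= alpha -> (0 < N)%N -> 0 <= lam gamma alpha N < 1.
Proof.
move=> g_gt0 g_le1 a_ge0 N_gt0; rewrite /lam.
have u_ge1 : 1 <= N%:R `^ alpha.
  by rewrite -[leLHS](powRr0 N%:R); apply: ler_powR; rewrite ?ler1n.
have u_gt0 : 0 < N%:R `^ alpha := lt_le_trans ltr01 u_ge1.
have : gamma / N%:R `^ alpha <= 1 by rewrite ler_pdivrMr // mul1r (le_trans g_le1).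
have : 0 < gamma / N%:R `^ alpha by rewrite divr_gt0.
by move=> *; apply/andP; split; lra.
Qed.

Lemma scaled_sum_rate (gamma alpha xi K B S p : R) :
  0 < gamma -> 0 < alpha -> 0 <= xi -> 1 <= p -> 0 <= B -> B <= K * ln p ->
  - S * (gamma / p `^ alpha) <= 3 * B ^+ 2 ->
  - p^-1 * S <= 3 * (2 * K / alpha) ^+ 2 / gamma / p `^ (1 - 2 * alpha - 3 * xi).
Proof.
move=> g_gt0 a_gt0 xi_ge0 p_ge1 B_ge0 B_le S_le.
have p_gt0 : 0 < p := lt_le_trans ltr01 p_ge1.
set D := 3 * _ / gamma; set u := p `^ alpha; set v := p `^ _.
have D_ge0 : 0 <= D by rewrite /D divr_ge0 ?(ltW g_gt0) // mulr_ge0 ?sqr_ge0.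
have [u_gt0 v_gt0] : 0 < u /\ 0 < v by rewrite !powR_gt0.
have B_sq := sqr_le_powR_of_le_ln a_gt0 p_ge1 B_ge0 B_le; rewrite -/u in B_sq.
have S_le_D : - S <= D * (u * u).
  have -> : D * (u * u) = 3 * (2 * K / alpha) ^+ 2 * u * (u / gamma).
    by rewrite /D; field; rewrite (gt_eqF g_gt0) (gt_eqF a_gt0).
  have -> : - S = - S * (gamma / u) * (u / gamma).
    by field; rewrite (gt_eqF g_gt0) (gt_eqF u_gt0).
  by apply: ler_wpM2r; [rewrite divr_ge0 // ltW | lra].
have uuv : u * u * v <= p.
  rewrite /u -powRD ?(gt_eqF p_gt0) ?implybT //.
  by apply: powR_mul_le1 => //; lra.
have Sv : - S * v <= D * p.
  apply: le_trans (ler_wpM2r (ltW v_gt0) S_le_D) _.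
  by rewrite -mulrA ler_wpM2l.
rewrite ler_pdivlMr // (_ : _ * S * v = (- S * v) / p); last by ring.
by rewrite ler_pdivrMr.
Qed.

End Asymptotics.

Theorem lemma11 (R : realType) (gamma alpha xi : R) (b : nat -> nat) :
  0 < gamma -> gamma <= 1 -> 0 < alpha -> alpha < 4^-1 -> 0 < xi ->
  (forall N : nat, (1 <= b N)%N) ->
  (exists K : R, exists N1 : nat, forall N : nat, (N1 <= N)%N ->
      (b N)%:R <= K * ln (N%:R : R)) ->
  exists C : R, 0 < C /\ exists N0 : nat, forall N : nat, (N0 <= N)%N ->
    forall sstar : 'cV[R]_(b N),
      in_region sstar -> fvec (lam gamma alpha N) sstar = 0 ->
      - (N%:R)^-1 * \sum_(i < b N)
          (invmx (jac (lam gamma alpha N) sstar)^T) i i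
            * ftilde (lam gamma alpha N) sstar i
      <= C / (N%:R `^ (1 - 2 * alpha - 3 * xi)).
Proof.
move=> g_gt0 g_le1 a_gt0 _ xi_gt0 _ [K [N1 b_le]].
set D := 3 * (2 * K / alpha) ^+ 2 / gamma.
have D_ge0 : 0 <= D by rewrite /D divr_ge0 ?(ltW g_gt0) // mulr_ge0 ?sqr_ge0.
exists (D + 1); split; first lra.
exists (maxn N1 1) => N; rewrite geq_max => /andP[N1N N_gt0] s s_region s_eq.
have N_ge1 : 1 <= N%:R :> R by rewrite ler1n.
have l_range := lam_range g_gt0 g_le1 (ltW a_gt0) N_gt0.
have := inv_jacT_ftilde_sum_bound s_region l_range s_eq.
have -> : 1 - lam gamma alpha N = gamma / N%:R `^ alpha by rewrite /lam; ring.
move=> /(scaled_sum_rate g_gt0 a_gt0 (ltW xi_gt0) N_ge1 (ler0n _ _) (b_le N N1N)).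
move/le_trans; apply; rewrite -/D ler_pM2r ?invr_gt0 ?powR_gt0 ?ltr0n //; lra.
Qed.
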